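(* Consider any execution of Phase 1 of COOL. Let $\boldsymbol M_1,\dots,\boldsymbol M_\eta$ be the distinct initial messages held by honest processors, ordered so that $\boldsymbol M_1,\dots,\boldsymbol M_{\eta^{[1]}}$ are exactly those held by at least one honest processor $i$ with $s^{[1]}_i=1$. For $l\in[1:\eta]$ let $\mathcal A_l=\{i \text{ honest}: \boldsymbol w_i=\boldsymbol M_l\}$ and $\mathcal A^{[1]}_l=\{i\in\mathcal A_l: s^{[1]}_i=1\}$, and for $j\ne l$ let $\mathcal A_{l,j}=\{i\in\mathcal A_l: \boldsymbol h_i^{\mathsf T}\boldsymbol M_l=\boldsymbol h_i^{\mathsf T}\boldsymbol M_j\}$ and $\mathcal A^{[1]}_{l,j}=\{i\in\mathcal A^{[1]}_l: \boldsymbol h_i^{\mathsf T}\boldsymbol M_l=\boldsymbol h_i^{\mathsf T}\boldsymbol M_j\}$. If $\eta\ge\eta^{[1]}\ge 2$, then $|\mathcal A_{l,j}|+|\mathcal A_{j,l}|<k$ for all $j\ne l$, $j,l\in[1:\eta]$, and $|\mathcal A^{[1]}_{l,j}|+|\mathcal A^{[1]}_{j,l}|<k$ for all $j\ne l$, $j,l\in[1:\eta^{[1]}]$.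
   Context: Setting. $n$ processors indexed by $[1:n]$, pairwise joined by reliable private synchronous channels; recipients know senders. At most $t$ processors are dishonest (controlled arbitrarily by an adversary; missing values replaced by a fixed default); the others are honest. Processor $i$ holds an $\ell$-bit initial message $\boldsymbol w_i$. $\phi$ is a default value different from every $\ell$-bit message. Logarithms are base 2. Code. $k=\lfloor t/5\rfloor+1$, $c=\lceil \max\{\ell,(t/5+1)\log(n+1)\}/k\rceil$. Messages are zero-padded to $kc$ bits and viewed as vectors in $GF(2^c)^k$. Integers in $[1:n]$ are identified with distinct nonzero elements of $GF(2^c)$ (e.g. via binary representation, possible since $n\le 2^c-1$); $\boldsymbol h_i\in GF(2^c)^k$ has entries $h_{i,j}=\prod_{p\in[1:k],\,p\ne j}\frac{i-p}{j-p}$, $j\in[1:k]$, computed in $GF(2^c)$. Phase 1 of COOL (honest processor $i$): set $y^{(i)}_j:=\boldsymbol h_j^{\mathsf T}\boldsymbol w_i$ for $j\in[1:n]$ and $u_i(i):=1$; send $(y^{(i)}_j,y^{(i)}_i)$ to each $j\ne i$; for $j\ne i$ set $u_i(j):=1$ if the pair received from $j$ equals $(y^{(i)}_i,y^{(i)}_j)$ and $u_i(j):=0$ otherwise; the Phase-1 success indicator is $s^{[1]}_i:=1$ if $\sum_{j=1}^n u_i(j)\ge n-t$ and $s^{[1]}_i:=0$ otherwise. *)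

From mathcomp Require Import all_boot all_order all_algebra all_field.
Set Implicit Arguments. Unset Strict Implicit. Unset Printing Implicit Defensive.
Import GRing.Theory.
Local Open Scope ring_scope.

Definition cool_k (t : nat) : nat := (t %/ 5).+1.

(* c*k >= ell  and  c*k >= (t/5+1) log2(n+1)   (the latter written without
   logarithms:  c*k >= ((t+5)/5) log2(n+1)  <=>  (n+1)^(t+5) <= 2^(5ck)). *)
Definition c_ok (n t ell c : nat) : bool :=
  (ell <= c * cool_k t)%N && (n.+1 ^ (t + 5) <= 2 ^ (5 * (c * cool_k t)))%N.

(* c = ceil(max{ell, (t/5+1) log(n+1)} / k) is the least c satisfying c_ok. *)
Definition is_cool_c (n t ell c : nat) : Prop :=
  c_ok n t ell c /\ forall c', c_ok n t ell c' -> (c <= c')%N.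

Section Cool.
Variables (F : finFieldType) (n t ell c : nat).
(* [bits] : identification of c-bit strings with elements of GF(2^c) *)
Variable bits : c.-tuple bool -> F.
(* [emb] : identification of integers in [1:n] with nonzero field elements *)
Variable emb : nat -> F.

Local Notation k := (cool_k t).

Definition pad (w : seq bool) : seq bool := w ++ nseq (k * c - ell) false.

Definition enc (w : ell.-tuple bool) : 'rV[F]_k :=
  \row_(m < k) bits [tuple nth false (pad w) (m * c + b) | b < c].

(* h_{i,j}, j in [1:k] (j = m.+1), i a processor number *)
Definition hcoef (i : nat) (m : 'I_k) : F :=
  \prod_(p < k | p != m) ((emb i - emb p.+1) / (emb m.+1 - emb p.+1)).

Definition hT (i : nat) (x : 'rV[F]_k) : F := \sum_(m < k) hcoef i m * x 0 m.

(* Processors are 'I_n; processor (i : 'I_n) has number i.+1 in [1:n]. *)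
Variable w : 'I_n -> ell.-tuple bool.
(* recv i j = pair received by processor i from processor j in Phase 1 *)
Variable recv : 'I_n -> 'I_n -> F * F.

Definition y (i j : 'I_n) : F := hT j.+1 (enc (w i)).

Definition u (i j : 'I_n) : bool := (i == j) || (recv i j == (y i i, y i j)).

Definition s1 (i : 'I_n) : bool := (n - t <= \sum_(j < n) u i j)%N.

(* honest senders follow the protocol: honest j sends (y^{(j)}_i, y^{(j)}_j) to i *)
Definition phase1_exec (H : {set 'I_n}) : Prop :=
  forall i j : 'I_n, j \in H -> i != j -> recv i j = (y j i, y j j).

Variable H : {set 'I_n}.
Variable M : nat -> ell.-tuple bool.

Definition Aset (l : nat) : {set 'I_n} := [set i in H | w i == M l].
Definition A1set (l : nat) : {set 'I_n} := [set i in Aset l | s1 i].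
Definition Apair (l j : nat) : {set 'I_n} :=
  [set i in Aset l | hT i.+1 (enc (M l)) == hT i.+1 (enc (M j))].
Definition A1pair (l j : nat) : {set 'I_n} :=
  [set i in A1set l | hT i.+1 (enc (M l)) == hT i.+1 (enc (M j))].

End Cool.

(* The map [x |-> h_i^T x] evaluates at the point [i] the polynomial of
   degree < k interpolating the k coordinates of [x] at the nodes [1..k]:
   the code is a Reed-Solomon code.  Two distinct messages therefore give
   a nonzero difference polynomial of degree < k, so their codewords agree
   at fewer than k of the distinct points [1..n].  The processors of
   [A_{l,j}] and of [A_{j,l}] are such agreement points, and the two sets
   are disjoint since an honest processor holds a single message. *)

From mathcomp Require Import all_boot all_order all_algebra all_field.
From mathcomp Require Import zify.
Set Implicit Arguments. Unset Strict Implicit. Unset Printing Implicit Defensive.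
Import GRing.Theory.
Local Open Scope ring_scope.

Section Lagrange.
Variables (F : fieldType) (k : nat) (a : 'I_k -> F).

Definition lagrange_basis (m : 'I_k) : {poly F} :=
  \prod_(p < k | p != m) ((a m - a p)^-1 *: ('X - (a p)%:P)).

Definition lagrange_poly (x : 'I_k -> F) : {poly F} :=
  \sum_(m < k) x m *: lagrange_basis m.

Lemma horner_lagrange_basis m e :
  (lagrange_basis m).[e] = \prod_(p < k | p != m) ((e - a p) / (a m - a p)).
Proof.
rewrite /lagrange_basis horner_prod; apply: eq_bigr => p _.
by rewrite hornerZ hornerXsubC mulrC.
Qed.

Lemma size_lagrange_basis m : (size (lagrange_basis m) <= k)%N.
Proof.
apply: leq_trans (size_poly_prod_leq _ _) _; rewrite cardC1 card_ord leq_subLR.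
apply: (@leq_ltn_trans (\sum_(p < k | p != m) 2)%N).
  by apply: leq_sum => p _; apply: leq_trans (size_scale_leq _ _) _; rewrite size_XsubC.
by rewrite sum_nat_const cardC1 card_ord; have := ltn_ord m; lia.
Qed.

Lemma size_lagrange_poly x : (size (lagrange_poly x) <= k)%N.
Proof.
apply: leq_trans (size_sum _ _ _) _; apply/bigmax_leqP => m _.
exact: leq_trans (size_scale_leq _ _) (size_lagrange_basis m).
Qed.

Hypothesis a_inj : injective a.

Lemma lagrange_basis_node m m' : (lagrange_basis m).[a m'] = (m == m')%:R.
Proof.
rewrite horner_lagrange_basis; have [<-|neq_mm'] := eqVneq m m'.
  apply: big1 => p neq_pm; rewrite divff // subr_eq0.
  by apply: contra neq_pm => /eqP /a_inj ->.
by rewrite (bigD1 m') 1?eq_sym //= subrr mul0r mul0r.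
Qed.

Lemma lagrange_poly_node x m : (lagrange_poly x).[a m] = x m.
Proof.
rewrite horner_sum (bigD1 m) //= big1 => [|m' neq_m'm].
  by rewrite hornerZ lagrange_basis_node eqxx mulr1 addr0.
by rewrite hornerZ lagrange_basis_node (negbTE neq_m'm) mulr0.
Qed.

Lemma lagrange_poly_neq0 x m : x m != 0 -> lagrange_poly x != 0.
Proof. by apply: contraNneq => x0; rewrite -(lagrange_poly_node x m) x0 horner0. Qed.

End Lagrange.

Lemma card_roots_lt_size (R : idomainType) (T : finType) (p : {poly R})
    (f : T -> R) (S : {set T}) :
  p != 0 -> {in S &, injective f} -> {in S, forall i, root p (f i)} ->
  (#|S| < size p)%N.
Proof.
move=> p_neq0 f_inj rootS; rewrite cardE -(size_map f).
apply: max_poly_roots => //.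
  by apply/allP => _ /mapP [i iS ->]; apply: rootS; rewrite -mem_enum.
by rewrite map_inj_in_uniq ?enum_uniq // => i j; rewrite !mem_enum; apply: f_inj.
Qed.

Section ReedSolomon.
Variables (F : finFieldType) (n t : nat) (emb : nat -> F).
Local Notation k := (cool_k t).

Lemma hT_lagrange i (x : 'rV[F]_k) :
  hT emb i x = (lagrange_poly (fun p : 'I_k => emb p.+1) (x 0)).[emb i].
Proof.
rewrite horner_sum; apply: eq_bigr => m _.
by rewrite hornerZ horner_lagrange_basis mulrC.
Qed.

Lemma hTB i (x y : 'rV[F]_k) : hT emb i (x - y) = hT emb i x - hT emb i y.
Proof. by rewrite /hT -sumrB; apply: eq_bigr => m _; rewrite !mxE mulrBr. Qed.

Hypothesis le_kn : (k <= n)%N.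
Hypothesis emb_inj : {in [pred i : nat | 1 <= i <= n]%N &, injective emb}.

Lemma emb_succ_inj m : (m <= n)%N -> injective (fun p : 'I_m => emb p.+1).
Proof.
move=> le_mn p q /emb_inj eq_pq; apply/val_inj/succn_inj/eq_pq;
  by rewrite inE /= (leq_trans (ltn_ord _) le_mn).
Qed.

Lemma card_hT_agree_lt (x y : 'rV[F]_k) (S : {set 'I_n}) :
  x != y -> {in S, forall i : 'I_n, hT emb i.+1 x = hT emb i.+1 y} ->
  (#|S| < k)%N.
Proof.
move=> neq_xy agreeS.
have [m neq_m] : exists m, x 0 m != y 0 m.
  apply/existsP; apply: contraNT neq_xy => /existsPn eq_xy.
  by apply/eqP/rowP => m; apply/eqP/negPn/eq_xy.
have nodes_inj := emb_succ_inj le_kn.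
have P_neq0 : lagrange_poly (fun p : 'I_k => emb p.+1) ((x - y) 0) != 0.
  by apply: (lagrange_poly_neq0 nodes_inj (m := m)); rewrite !mxE subr_eq0.
apply: leq_trans (card_roots_lt_size P_neq0 _ _) (size_lagrange_poly _ _).
  exact: in2W (emb_succ_inj (leqnn n)).
by move=> i iS; rewrite /root -hT_lagrange hTB agreeS ?subrr.
Qed.

End ReedSolomon.

Lemma enc_inj (F : finFieldType) t ell c (bits : c.-tuple bool -> F) :
  (ell <= c * cool_k t)%N -> injective bits -> injective (@enc F t ell c bits).
Proof.
move=> le_ell_ck bits_inj w1 w2 eq_enc; apply: eq_from_tnth => q.
have c_gt0 : (0 < c)%N by move: (ltn_ord q) le_ell_ck; case: (c); lia.
have lt_block : (q %/ c < cool_k t)%N.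
  by rewrite ltn_divLR // mulnC; apply: leq_trans (ltn_ord q) le_ell_ck.
have /rowP/(_ (Ordinal lt_block)) := eq_enc; rewrite !mxE => /bits_inj.
move/(congr1 (fun s => tnth s (Ordinal (ltn_pmod q c_gt0)))); rewrite !tnth_mktuple /=.
by rewrite -divn_eq /pad !nth_cat !size_tuple ltn_ord !(tnth_nth false).
Qed.

Section Messages.
Variables (F : finFieldType) (n t ell c : nat) (bits : c.-tuple bool -> F).
Variables (emb : nat -> F) (w : 'I_n -> ell.-tuple bool).
Variables (recv : 'I_n -> 'I_n -> F * F) (H : {set 'I_n}).
Variable M : nat -> ell.-tuple bool.

Lemma A1pair_sub l j :
  A1pair t bits emb w recv H M l j \subset Apair t bits emb w H M l j.
Proof.
by apply/subsetP => i; rewrite !inE => /andP [/andP [/andP [-> ->] _] ->].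
Qed.

Lemma card_Apair_lt l j :
  (cool_k t <= n)%N -> (ell <= c * cool_k t)%N -> injective bits ->
  {in [pred i : nat | 1 <= i <= n]%N &, injective emb} -> M l != M j ->
  (#|Apair t bits emb w H M l j| + #|Apair t bits emb w H M j l| < cool_k t)%N.
Proof.
move=> le_kn le_ell_ck bits_inj emb_inj neq_M.
have disjoint_pairs : Apair t bits emb w H M l j :&: Apair t bits emb w H M j l = set0.
  apply/setP => i; rewrite !inE; apply/negP.
  case/andP=> /andP [/andP [_ /eqP ->] _] /andP [/andP [_ /eqP eq_M] _].
  by rewrite eq_M eqxx in neq_M.
rewrite -cardsUI disjoint_pairs cards0 addn0.
apply: (card_hT_agree_lt le_kn emb_inj (x := enc t bits (M l)) (y := enc t bits (M j))).
  by rewrite (inj_eq (enc_inj le_ell_ck bits_inj)).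
by move=> i; rewrite !inE => /orP [] /andP [_ /eqP].
Qed.

End Messages.

Theorem lemma7 (n t ell c : nat) (F : finFieldType)
  (bits : c.-tuple bool -> F) (emb : nat -> F)
  (w : 'I_n -> ell.-tuple bool) (recv : 'I_n -> 'I_n -> F * F)
  (H : {set 'I_n}) (M : nat -> ell.-tuple bool) (eta eta1 : nat) :
  (0 < n)%N -> (t <= n)%N ->
  is_cool_c n t ell c ->
  #|F| = (2 ^ c)%N ->
  bijective bits ->
  {in [pred i : nat | 1 <= i <= n]%N &, injective emb} ->
  (forall i : nat, (1 <= i <= n)%N -> emb i != 0%R) ->
  (#|~: H| <= t)%N ->
  phase1_exec t bits emb w recv H ->
  {in [pred l : nat | l < eta]%N &, injective M} ->
  (forall i, i \in H -> exists2 l, (l < eta)%N & w i = M l) ->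
  (forall l, (l < eta)%N -> exists2 i, i \in H & w i = M l) ->
  (forall l, (l < eta)%N ->
     (l < eta1)%N = [exists i in H, (w i == M l) && s1 t bits emb w recv i]) ->
  (2 <= eta1 <= eta)%N ->
  (forall l j, (l < eta)%N -> (j < eta)%N -> l != j ->
     (#|Apair t bits emb w H M l j| + #|Apair t bits emb w H M j l| < cool_k t)%N) /\
  (forall l j, (l < eta1)%N -> (j < eta1)%N -> l != j ->
     (#|A1pair t bits emb w recv H M l j| + #|A1pair t bits emb w recv H M j l| < cool_k t)%N).
Proof.
move=> n_gt0 le_tn [/andP [le_ell_ck _] _] _ /bij_inj bits_inj emb_inj _ _ _ M_inj
  _ _ _ /andP [_ le_eta1_eta].
have le_kn : (cool_k t <= n)%N by rewrite /cool_k; lia.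
have card_A_lt l j : (l < eta)%N -> (j < eta)%N -> l != j ->
    (#|Apair t bits emb w H M l j| + #|Apair t bits emb w H M j l| < cool_k t)%N.
  move=> lt_l lt_j neq_lj; apply: card_Apair_lt => //.
  by apply: contra neq_lj => /eqP /M_inj -> //.
split=> // l j lt_l lt_j neq_lj.
have [lt_l_eta lt_j_eta] := (leq_trans lt_l le_eta1_eta, leq_trans lt_j le_eta1_eta).
apply: leq_ltn_trans (card_A_lt l j lt_l_eta lt_j_eta neq_lj).
by rewrite leq_add ?subset_leq_card ?A1pair_sub.
Qed.
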